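(* Let $(\mathcal Z,\mathcal W,\phi)$ be a state-flux triple, $\mathcal L$ an L-function on $\mathcal Z$ with convex dual $\mathcal H$, and $\mathcal V$ a quasipotential corresponding to $\mathcal L$. Then: (i) $\mathcal R^{1/2}_F(\rho)\ge0$ for all $\rho\in\mathrm{Dom}(F)$, and $\mathcal R^{1/2}_{2F}(\rho)=0$ for all $\rho\in\mathrm{Dom}_{\mathrm{symdiss}}(F)$; (ii) $\mathcal R^{1/2}_{2F^{\mathrm{sym}}}(\rho)=0$ for all $\rho\in\mathrm{Dom}(F^{\mathrm{sym}})$; (iii) $\mathcal R^{1/2}_{2F^{\mathrm{asym}}}(\rho)=0$ for all $\rho\in\mathrm{Dom}_{\mathrm{symdiss}}(F^{\mathrm{asym}})$.
   Context: A state-flux triple $(\mathcal Z,\mathcal W,\phi)$ consists of differentiable Banach manifolds $\mathcal Z$, $\mathcal W$ and a surjective differentiable map $\phi:\mathcal W\to\mathcal Z$ such that: $T_w\mathcal W$ depends on $w$ only through $\rho=\phi[w]$ (written $T_\rho\mathcal W$); the differential of $\phi$ is a bounded linear map depending only on $\rho$, written $d\phi_\rho:T_\rho\mathcal W\to T_\rho\mathcal Z$; and $T_\rho\mathcal W$, $T_\rho\mathcal Z$ have Banach preduals $T^*_\rho\mathcal W$, $T^*_\rho\mathcal Z$ with duality pairings $\langle\cdot,\cdot\rangle$; $d\phi_\rho^{\mathsf T}:T^*_\rho\mathcal Z\to T^*_\rho\mathcal W$ denotes the adjoint. An L-function on $\mathcal Z$ is $\mathcal L:\{(\rho,j):\rho\in\mathcal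 Z,j\in T_\rho\mathcal W\}\to\mathbb R\cup\{\infty\}$ such that for each $\rho$, $\inf\mathcal L(\rho,\cdot)=0$, there is a unique $j^0(\rho)$ with $\mathcal L(\rho,j^0(\rho))=0$, and $\mathcal L(\rho,\cdot)$ is convex and lower semicontinuous; $\mathcal H(\rho,\zeta)=\sup_j\{\langle\zeta,j\rangle-\mathcal L(\rho,j)\}$ for $\zeta\in T^*_\rho\mathcal W$. A quasipotential is $\mathcal V:\mathcal Z\to\mathbb R\cup\{\infty\}$ with $\inf\mathcal V=0$ and $\mathcal H(\rho,d\phi_\rho^{\mathsf T}d\mathcal V(\rho))=0$ at every $\rho$ where the Gateaux derivative $d\mathcal V(\rho)\in T^*_\rho\mathcal Z$ exists. Driving force: $\mathrm{Dom}(F)$ is the set of $\rho$ at which $j\mapsto\mathcal L(\rho,j)$ is Gateaux differentiable at $0$, and $F(\rho):=-d\mathcal L(\rho,0)$. $\mathrm{Dom}_{\mathrm{symdiss}}(F):=\{\rho\in\mathrm{Dom}(F):\mathcal H(\rho,\zeta-F(\rho))=\mathcal H(\rho,-\zeta-F(\rho))\ \forall\zeta\in T^*_\rho\mathcal W\}$. $\mathrm{Dom}(F^{\mathrm{sym}})$ is the set of $\rho$ where $\mathcal V$ is Gateaux differentiable, $F^{\mathrm{sym}}(\rho):=-\frac12d\phi_\rho^{\mathsf T}d\mathcal V(\rho)$; $\mathrm{Dom}(F^{\mathrm{asym}}):=\mathrm{Dom}(F)\cap\mathrm{Dom}(F^{\mathrm{sym}})$, $F^{\mathrm{asym}}(\rho):=F(\rho)+\frac12d\phi_\rho^{\mathsf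 T}d\mathcal V(\rho)$; $\mathrm{Dom}_{\mathrm{symdiss}}(F^{\mathrm{asym}}):=\mathrm{Dom}(F^{\mathrm{asym}})\cap\mathrm{Dom}_{\mathrm{symdiss}}(F)$. For a covector field $G$ (i.e. $G(\rho)\in T^*_\rho\mathcal W$) the generalised Fisher information is $\mathcal R^\lambda_G(\rho):=-\mathcal H(\rho,-2\lambda G(\rho))$. *)

From HB Require Import structures.
From mathcomp Require Import all_boot all_order all_algebra.
From mathcomp Require Import all_classical all_reals all_analysis.
Set Implicit Arguments. Unset Strict Implicit. Unset Printing Implicit Defensive.
Import Order.TTheory GRing.Theory Num.Theory.
Import numFieldNormedType.Exports.
Local Open Scope classical_set_scope.
Local Open Scope ring_scope.

(* Duality pairing <.,.> : Pre x Sp -> R exhibiting Sp as the (isometric)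
   Banach dual of the predual Pre. *)
Definition is_duality (R : realType) (Pre Sp : completeNormedModType R)
  (p : Pre -> Sp -> R) : Prop :=
  [/\ (forall (a : R) x y v, p (a *: x + y) v = a * p x v + p y v),
      (forall (a : R) x v w, p x (a *: v + w) = a * p x v + p x w),
      (forall v x, `|p x v| <= `|x| * `|v|),
      (forall v (e : R), 0 < e -> exists x, `|x| <= 1 /\ `|v| - e < `|p x v|) &
      (forall f : Pre -> R,
          (forall (a : R) x y, f (a *: x + y) = a * f x + f y) -> continuous f ->
          exists! v, forall x, f x = p x v)].

(* A state-flux triple (Z, W, phi), recorded through the data used in the
   paper: tangent spaces T_rho Z, T_rho W (depending on rho = phi[w] only),
   their Banach preduals with pairings, the bounded linear differential
   d phi_rho and its adjoint, and the differentiable structure of Z given by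
   a class of differentiable curves through rho with their velocities. *)
Record sftriple (R : realType) := SFTriple {
  sfZ : Type;
  sfW : Type;
  sfphi : sfW -> sfZ;
  sfphi_surj : forall z, exists w, sfphi w = z;
  TZ : sfZ -> completeNormedModType R;
  TZs : sfZ -> completeNormedModType R;
  TW : sfZ -> completeNormedModType R;
  TWs : sfZ -> completeNormedModType R;
  pairZ : forall rho, TZs rho -> TZ rho -> R;
  pairW : forall rho, TWs rho -> TW rho -> R;
  pairZ_dual : forall rho, is_duality (@pairZ rho);
  pairW_dual : forall rho, is_duality (@pairW rho);
  dphi : forall rho, TW rho -> TZ rho;
  dphi_linear : forall rho (a : R) x y,
      dphi (a *: x + y) = a *: dphi x + dphi y :> TZ rho;
  dphi_cont : forall rho, continuous (@dphi rho);
  dphiT : forall rho, TZs rho -> TWs rho;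
  dphiT_adj : forall rho (z : TZs rho) (j : TW rho),
      pairW (dphiT z) j = pairZ z (dphi j);
  sfcurve : forall rho, (R -> sfZ) -> TZ rho -> Prop;
  sfcurve_at : forall rho g v, @sfcurve rho g v -> g 0 = rho;
  sfcurve_ex : forall rho (v : TZ rho), exists g, sfcurve g v
}.

Section Defs.
Variables (R : realType) (T : sftriple R).

Definition gderivZ (V : sfZ T -> \bar R) (rho : sfZ T) (xi : TZs rho) : Prop :=
  V rho \is a fin_num /\
  forall g (v : TZ rho), sfcurve g v ->
    (\forall t \near (0 : R), V (g t) \is a fin_num) /\
    ((fun t : R => (fine (V (g t)) - fine (V rho)) / t) @ (0 : R)^'
       --> pairZ xi v).

Definition LFn := forall rho : sfZ T, TW rho -> \bar R.

Definition is_Lfunction (L : LFn) : Prop :=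
  forall rho,
  [/\ (forall j, L rho j != -oo%E),
      ereal_inf (range (L rho)) = 0%E,
      (exists! j, L rho j = 0%E),
      (forall (l : R) (j1 j2 : TW rho), 0 <= l <= 1 ->
         (L rho (l *: j1 + (1 - l) *: j2)%R <= l%:E * L rho j1 + (1 - l)%:E * L rho j2)%E) &
      (forall j0 (a : R), (a%:E < L rho j0)%E ->
         \forall j \near j0, (a%:E < L rho j)%E)].

Definition Hdual (L : LFn) rho (z : TWs rho) : \bar R :=
  ereal_sup [set ((pairW z j)%:E - L rho j)%E | j in [set: TW rho]].

Definition is_quasipotential (L : LFn) (V : sfZ T -> \bar R) : Prop :=
  [/\ (forall rho, V rho != -oo%E),
      ereal_inf (range V) = 0%E &
      forall (rho : sfZ T) (xi : TZs rho), gderivZ V xi -> Hdual L (dphiT xi) = 0%E].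

(* zeta is the Gateaux derivative of j |-> L(rho, j) at j = 0, with values
   in the predual T*_rho W; then F(rho) = - zeta *)
Definition gderivL (L : LFn) rho (z : TWs rho) : Prop :=
  L rho 0 \is a fin_num /\
  forall j : TW rho,
    (\forall t \near (0 : R), L rho (t *: j) \is a fin_num) /\
    ((fun t : R => (fine (L rho (t *: j)) - fine (L rho 0)) / t) @ (0 : R)^'
       --> pairW z j).

(* rho in Dom_symdiss, for the value Frho = F(rho) *)
Definition symdiss (L : LFn) rho (Frho : TWs rho) : Prop :=
  forall z : TWs rho, Hdual L (z - Frho) = Hdual L (- z - Frho).

Definition fisher (L : LFn) (lam : R) rho (Grho : TWs rho) : \bar R :=
  (- Hdual L ((- (2 * lam)) *: Grho))%E.

End Defs.

(** At a point where [L(rho, .)] is differentiable at [0], convexity puts [L(rho, .)]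
    above its tangent, so the slope [zeta = dL(rho, 0)] satisfies
    [<zeta, j> - L(rho, j) <= - L(rho, 0) <= 0], i.e. [H(rho, -F(rho)) <= 0].
    The vanishing statements all reduce to [H(rho, 0) = - inf L(rho, .) = 0] or to the
    quasipotential identity [H(rho, dphi^T dV) = 0]: symmetric dissipation says that
    [H(rho, .)] is invariant under the reflection [y |-> - y - 2 F(rho)], which carries
    the relevant covectors [2 F] and [2 F^asym] onto [0] and [dphi^T dV]. *)
From HB Require Import structures.
From mathcomp Require Import all_boot all_order all_algebra.
From mathcomp Require Import all_classical all_reals all_analysis.
From mathcomp Require Import lra.
Import Order.TTheory GRing.Theory Num.Theory.
Import numFieldNormedType.Exports.
Local Open Scope classical_set_scope.
Local Open Scope ring_scope.

Lemma duality_pair0l (R : realType) (Pre Sp : completeNormedModType R)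
    (p : Pre -> Sp -> R) v :
  is_duality p -> p 0 v = 0.
Proof.
case=> linl _ _ _ _; have := linl 1 0 0 v.
by rewrite scale1r addr0 mul1r => ?; lra.
Qed.

Lemma convex_slope_le (R : realType) (g : R -> \bar R) (d : R) :
  g 0 \is a fin_num -> g 1 != -oo%E ->
  (forall t, 0 <= t <= 1 -> (g t <= t%:E * g 1%R + (1 - t)%:E * g 0%R)%E) ->
  (\forall t \near 0, g t \is a fin_num) ->
  (fun t => (fine (g t) - fine (g 0)) / t) @ 0^' --> d ->
  (g 0%R + d%:E <= g 1%R)%E.
Proof.
move=> g0_fin; case: (g 1) => [r| |] // _ g_cvx g_fin slope_cvg; last first.
  by rewrite leey.
have slope_cvg_right := cvg_dnbhs_at_right slope_cvg.
rewrite -(fineK g0_fin) -EFinD lee_fin -lerBrDl.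
rewrite -(cvg_lim _ slope_cvg_right) //.
apply: limr_le; first by apply/cvg_ex; exists d.
near=> t.
have t_gt0 : 0 < t by near: t; exact: nbhs_right_gt.
have t_lt1 : t < 1 by near: t; exact: nbhs_right_lt.
have gt_fin : g t \is a fin_num.
  by near: t; apply: (@cvg_within _ (nbhs (0 : R)) _ (fun u => 0 < u)).
have t01 : 0 <= t <= 1 by rewrite !ltW.
have := g_cvx t t01; rewrite -(fineK g0_fin) -(fineK gt_fin) -!EFinM -EFinD lee_fin.
by rewrite ler_pdivrMr // => ?; nra.
Unshelve. all: by end_near.
Qed.

Section FisherInformation.
Context {R : realType} {T : sftriple R} {L : LFn T}.

Lemma Hdual0 {rho} : Hdual L (0 : TWs rho) = (- ereal_inf (range (L rho)))%E.
Proof.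
rewrite /Hdual ereal_infEN oppeK; congr ereal_sup.
apply/seteqP; split => x /=.
- case=> j _ <-; exists (L rho j); first by exists j.
  by rewrite duality_pair0l ?add0e //; exact: pairW_dual.
- case=> _ [j _ <-] <-; exists j => //.
  by rewrite duality_pair0l ?add0e //; exact: pairW_dual.
Qed.

Lemma Lfunction_ge0 {rho} (j : TW rho) : is_Lfunction L -> (0 <= L rho j)%E.
Proof.
move=> /(_ rho) [_ L_inf _ _ _]; rewrite -L_inf.
by apply: ereal_inf_lbound; exists j.
Qed.

Lemma Lfunction_Hdual0 {rho} : is_Lfunction L -> Hdual L (0 : TWs rho) = 0%E.
Proof. by move=> /(_ rho) [_ L_inf _ _ _]; rewrite Hdual0 L_inf oppe0. Qed.

Lemma Lfunction_subgradient {rho} {z : TWs rho} (j : TW rho) :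
  is_Lfunction L -> gderivL L z -> (L rho 0%R + (pairW z j)%:E <= L rho j)%E.
Proof.
move=> /(_ rho) [L_noo _ _ L_cvx _] [L0_fin /(_ j) [Ltj_fin slope_cvg]].
have := @convex_slope_le _ (fun t => L rho (t *: j)) (pairW z j).
rewrite /= scale0r scale1r; apply=> // t t01.
by have := L_cvx t j 0 t01; rewrite scaler0 addr0.
Qed.

Lemma Hdual_gderivL_le {rho} {z : TWs rho} :
  is_Lfunction L -> gderivL L z -> (Hdual L z <= - L rho 0%R)%E.
Proof.
move=> HL dL; apply: ge_ereal_sup => _ [j _ <-].
have := Lfunction_subgradient j HL dL.
have [L_noo _ _ _ _] := HL rho; move: (L_noo j).
case: (L rho j) => [r| |] //= _; last by rewrite addeNy leNye.
case: dL => L0_fin _; rewrite -(fineK L0_fin) -EFinD -EFinN -EFinB !lee_fin.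
by move=> ?; lra.
Qed.

Lemma symdiss_Hdual_reflect {rho} {Frho : TWs rho} (y : TWs rho) :
  symdiss L Frho -> Hdual L (- y - 2 *: Frho) = Hdual L y.
Proof.
move=> sym; have {2}<- : - (- y - Frho) - Frho = y by rewrite opprD !opprK addrK.
by rewrite -sym scaler_nat mulr2n opprD addrA.
Qed.

Lemma fisher_half {rho} (Grho : TWs rho) :
  fisher L (2^-1) Grho = (- Hdual L (- Grho)%R)%E.
Proof. by rewrite /fisher mulfV ?pnatr_eq0 // scaleN1r. Qed.

End FisherInformation.

Theorem lemma2p21 (R : realType) (T : sftriple R) (L : LFn T)
  (V : sfZ T -> \bar R) :
  is_Lfunction L -> is_quasipotential L V ->
  (* (i) *)
  ((forall rho (z : TWs rho), gderivL L z ->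
      (0 <= fisher L (2^-1) (- z)%R)%E) /\
   (forall rho (z : TWs rho), gderivL L z -> symdiss L (- z) ->
      fisher L (2^-1) (2 *: (- z)) = 0%E)) /\
  (* (ii) : F^sym(rho) = -1/2 dphi^T dV(rho) *)
  (forall rho (xi : TZs rho), gderivZ V xi ->
      fisher L (2^-1) (2 *: (- (2^-1 *: dphiT xi))) = 0%E) /\
  (* (iii) : F^asym(rho) = F(rho) + 1/2 dphi^T dV(rho) *)
  (forall rho (z : TWs rho) (xi : TZs rho),
      gderivL L z -> gderivZ V xi -> symdiss L (- z) ->
      fisher L (2^-1) (2 *: (- z + 2^-1 *: dphiT xi)) = 0%E).
Proof.
move=> HL [_ _ HV].
have halfK (rho : sfZ T) (y : TWs rho) : 2 *: (2^-1 *: y) = y.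
  by rewrite scalerA mulfV ?pnatr_eq0 // scale1r.
split; [split|split] => rho z.
- move=> dL; rewrite fisher_half opprK oppe_ge0.
  apply: le_trans (Hdual_gderivL_le HL dL) _.
  by rewrite oppe_le0 Lfunction_ge0.
- move=> _ sym; have := symdiss_Hdual_reflect 0 sym; rewrite oppr0 sub0r.
  by rewrite fisher_half => ->; rewrite Lfunction_Hdual0 // oppe0.
- by move=> dV; rewrite fisher_half scalerN halfK opprK HV // oppe0.
- move=> xi _ dV sym; rewrite fisher_half scalerDr halfK opprD addrC.
  by rewrite symdiss_Hdual_reflect // HV // oppe0.
Qed.
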